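(* Let $S$ be the group defined in the context. The subgroup $\langle v_1v_3\rangle$ is cyclic of order $4$ and is normal in $S$. Moreover, $S/\langle v_1v_3\rangle\cong \mathbb{Z}/2\wr\mathbb{Z}/2\wr\mathbb{Z}/2$.
   Context: Let $S$ be the group generated by $v_1,v_2,v_3,s,t$, where $v_1,v_2,v_3$ commute, each has order $4$, and together generate $(\mathbb{Z}/4)^3$. The elements $s,t$ generate $D_8=\langle t,s\mid t^2=s^4=(ts)^2=1\rangle$, which acts on $(\mathbb{Z}/4)^3$ by conjugation. Writing $x^y=yxy^{-1}$, the action is $$v_1^t=v_3^{-1},\quad v_2^t=v_2^{-1},\quad v_1^s=v_2,\quad v_2^s=v_3,\quad v_3^s=v_2^{-1}v_1v_3.$$ So $S=(\mathbb{Z}/4)^3\rtimes D_8$ has order $2^9$. The group $\mathbb{Z}/2\wr\mathbb{Z}/2\wr\mathbb{Z}/2$ is the iterated wreath product, of order $2^7$; it is a Sylow $2$-subgroup of the symmetric group $S_8$. *)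

From mathcomp Require Import all_boot all_fingroup all_solvable.
Set Implicit Arguments.
Unset Strict Implicit.
Unset Printing Implicit Defensive.

(* The iterated wreath product Z/2 wr Z/2 wr Z/2, realized (as usual) as the
   automorphism group of the rooted binary tree of depth 3, acting on its 8
   leaves 'I_8 (leaf x has address given by the binary digits of x): the
   permutations of 'I_8 preserving the block systems {2k, 2k+1} and
   {4k, ..., 4k+3}.  This is the permutational iterated wreath product,
   of order 2^7 (a Sylow 2-subgroup of S_8). *)
Definition wreath222 : {set {perm 'I_8}} :=
  [set p : {perm 'I_8} | [forall x : 'I_8, forall y : 'I_8,
      ((x %/ 2 == y %/ 2) == (p x %/ 2 == p y %/ 2)) &&
      ((x %/ 4 == y %/ 4) == (p x %/ 4 == p y %/ 4))]].

(* The five permutations pv1, pv2, pv3, ps, pt of the eight leaves of the binary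
   tree of depth 3 satisfy the relations imposed on v1, v2, v3, s, t: the first
   three commute and have order 4, the last two satisfy the dihedral relations,
   and they conjugate each other as prescribed.  Hence v1 |-> pv1, ..., t |-> pt
   extends along V = (Z/4)^3 and D = D8 to a morphism f of S = V ><| D.
   Since pv1 * pv3 = 1, the cyclic group <v1 v3> of order 4 lies in ker f, and
   the image of f contains the 128 words pv1^i pv2^j ps^k pt^l, which exhaust the
   tree automorphism group (checked by enumerating the 8! permutations).  As
   #|S| = 512 = 4 * 128, ker f = <v1 v3>, and the first isomorphism theorem
   concludes. *)

From mathcomp Require Import all_boot all_fingroup all_solvable.
From mathcomp Require Import zify.
Set Implicit Arguments. Unset Strict Implicit. Unset Printing Implicit Defensive.

Local Open Scope group_scope.

Lemma dihedral_conj (T : finGroupType) (s t : T) :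
  t ^+ 2 = 1 -> (t * s) ^+ 2 = 1 -> t * s * t^-1 = s^-1.
Proof.
move=> t2 ts2; have tV : t^-1 = t by rewrite -[t^-1]mul1g -t2 expgS expg1 mulgK.
apply/eqP; rewrite tV eq_mulgV1 invgK; apply/eqP.
by rewrite -ts2 expgS expg1 !mulgA.
Qed.

Section GroupLemmas.

Variable gT : finGroupType.
Implicit Types (x y z : gT) (A X Y : {set gT}) (G H K : {group gT}).

Lemma gen_set2 x y : <<[set x; y]>> = <[x]> <*> <[y]>.
Proof. by rewrite joing_idl joing_idr. Qed.

Lemma gen_set3 x y z : <<[set x; y; z]>> = <[x]> <*> <[y]> <*> <[z]>.
Proof. by rewrite -gen_set2 joing_idl joing_idr. Qed.

Lemma card_joing_le K H : H \subset 'N(K) -> #|K <*> H| <= #|K| * #|H|.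
Proof.
move=> nKH; rewrite norm_joinEr // mul_cardG.
by rewrite leq_pmulr ?cardG_gt0.
Qed.

Lemma card_joing_TI K H :
  H \subset 'N(K) -> #|K| * #|H| <= #|K <*> H| -> K :&: H = 1.
Proof. by move=> nKH; rewrite norm_joinEr //; apply: cardMg_TI. Qed.

Lemma gen_sub_mulclosed X A :
  1 \in A -> {in A &, forall x y, x * y \in A} -> X \subset A -> <<X>> \subset A.
Proof.
move=> A1 mulA sXA; have gA : group_set A by apply/group_setP.
by rewrite (gen_subG _ (Group gA)).
Qed.

Variable rT : finGroupType.

Lemma morph_act_gens X Y (fX : {morphism <<X>> >-> rT}) (fY : {morphism <<Y>> >-> rT}) :
    <<Y>> \subset 'N(<<X>>) ->
    {in X & Y, forall x a, fX (a * x * a^-1) = fY a * fX x * (fY a)^-1} ->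
  {in <<X>> & <<Y>>, morph_act 'J 'J fX fY}.
Proof.
move=> nXY fXY.
have XJ x a : x \in <<X>> -> a \in <<Y>> -> x ^ a \in <<X>>.
  by move=> Xx Ya; rewrite memJ_norm // (subsetP nXY).
pose A := [set a in <<Y>> | [forall x in <<X>>, fX (x ^ a) == fX x ^ fY a]].
have gA : group_set A.
  apply/group_setP; split=> [|a b]; rewrite !inE.
    by rewrite group1; apply/forall_inP => x _; rewrite conjg1 morph1 conjg1.
  move=> /andP[Ya /forall_inP fa] /andP[Yb /forall_inP fb].
  rewrite groupM //; apply/forall_inP => x Xx.
  by rewrite conjgM (eqP (fb _ (XJ _ _ Xx Ya))) (eqP (fa _ Xx)) morphM // conjgM.
have sYA : <<Y>> \subset A.
  (* [A] is a group, so it suffices that it contains the inverses of the generators. *)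
  rewrite (gen_subG _ (Group gA)); apply/subsetP => a Ya.
  rewrite -[a]invgK (groupV (Group gA)) inE groupV mem_gen //=.
  apply/forall_inP => x Xx; apply/eqP.
  pose B := [set y in <<X>> | fX (y ^ a^-1) == fX y ^ fY a^-1].
  suff /subsetP/(_ x Xx) : <<X>> \subset B by rewrite inE => /andP[_ /eqP].
  apply: gen_sub_mulclosed.
  - by rewrite inE group1 conj1g !morph1 conj1g eqxx.
  - move=> y z; rewrite !inE => /andP[Xy /eqP fy] /andP[Xz /eqP fz].
    have Ya' : a^-1 \in <<Y>> by rewrite groupV mem_gen.
    rewrite groupM //= conjMg (morphM fX (XJ _ _ Xy Ya') (XJ _ _ Xz Ya')) fy fz.
    by rewrite (morphM fX Xy Xz) conjMg.
  apply/subsetP => y Xy.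
  by rewrite inE mem_gen //= morphV ?mem_gen // !conjgE !invgK !mulgA fXY.
by move=> x a Xx /(subsetP sYA); rewrite inE => /andP[_ /forall_inP/(_ x Xx)/eqP].
Qed.

Lemma morph_of_cycles3 (x1 x2 x3 : gT) (y1 y2 y3 : rT) :
    commute x1 x2 -> commute x1 x3 -> commute x2 x3 ->
    #[x1] * #[x2] * #[x3] <= #|<<[set x1; x2; x3]>>| ->
    commute y1 y2 -> commute y1 y3 -> commute y2 y3 ->
    #[y1] %| #[x1] -> #[y2] %| #[x2] -> #[y3] %| #[x3] ->
  exists f : {morphism <<[set x1; x2; x3]>> >-> rT},
    [/\ f x1 = y1, f x2 = y2 & f x3 = y3].
Proof.
move=> cx12 cx13 cx23 le_V cy12 cy13 cy23 dv1 dv2 dv3.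
pose K := (<[x1]> <*> <[x2]>)%G.
have cK : <[x2]> \subset 'C(<[x1]>).
  by rewrite cycle_subG /= cent_cycle; apply/cent1P; apply: commute_sym.
have cV : <[x3]> \subset 'C(K).
  by rewrite cycle_subG -sub_cent1 join_subG !cycle_subG; apply/andP; split; apply/cent1P.
have nK := subset_trans cK (cent_sub _); have nV := subset_trans cV (cent_sub _).
have leK : #|K| <= #[x1] * #[x2] := card_joing_le nK.
have leKx3 : #|K <*> <[x3]>| <= #|K| * #[x3] := card_joing_le nV.
have prod_le : #[x1] * #[x2] * #[x3] <= #|K <*> <[x3]>| by move: le_V; rewrite gen_set3.
have [geK geKx3] : #[x1] * #[x2] <= #|K| /\ #|K| * #[x3] <= #|K <*> <[x3]>|.
  by have := order_gt0 x3; split; nia.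
have dK : <[x1]> \x <[x2]> = K by rewrite dprodEY // (card_joing_TI nK).
have dV : K \x <[x3]> = <<[set x1; x2; x3]>>.
  by rewrite gen_set3 dprodEY // (card_joing_TI nV).
pose f1 := eltm_morphism dv1; pose f2 := eltm_morphism dv2; pose f3 := eltm_morphism dv3.
have cf12 : f2 @* <[x2]> \subset 'C(f1 @* <[x1]>).
  by rewrite !im_eltm cycle_subG /= cent_cycle; apply/cent1P; apply: commute_sym.
pose f12 := dprodm_morphism dK cf12.
have cf3 : f3 @* <[x3]> \subset 'C(f12 @* K).
  rewrite im_dprodm !im_eltm centM subsetI !cycle_subG /= !cent_cycle.
  by apply/andP; split; apply/cent1P; apply: commute_sym.
have x1K : x1 \in K by rewrite mem_gen // inE cycle_id.
have x2K : x2 \in K by rewrite mem_gen // inE cycle_id orbT.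
exists (dprodm_morphism dV cf3); rewrite /= /f12 /f1 /f2 /f3; split.
- by rewrite dprodmEl //= dprodmEl ?cycle_id //= eltm_id.
- by rewrite dprodmEl //= dprodmEr ?cycle_id //= eltm_id.
by rewrite dprodmEr ?cycle_id //= eltm_id.
Qed.

Lemma dihedral_morphism n (s t : gT) (b c : rT) :
    s ^+ n = 1 -> t ^+ 2 = 1 -> (t * s) ^+ 2 = 1 -> #|<<[set s; t]>>| = (n * 2)%N ->
    b ^+ n = 1 -> c ^+ 2 = 1 -> (c * b) ^+ 2 = 1 ->
  exists f : {morphism <<[set s; t]>> >-> rT}, f s = b /\ f t = c.
Proof.
move=> sn t2 ts2 oD bn c2 cb2.
have tst := dihedral_conj t2 ts2.
have nst : <[t]> \subset 'N(<[s]>).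
  by rewrite -cycleV cycle_subG; apply/normP; rewrite -cycleJ conjgE invgK mulgA tst cycleV.
have le_D := card_joing_le nst; rewrite -gen_set2 oD -!orderE in le_D.
have n_gt0 : 0 < n by move: (cardG_gt0 <<[set s; t]>>%G); rewrite oD; lia.
have le_s : #[s] <= n by apply: dvdn_leq; rewrite ?order_dvdn ?sn.
have le_t : #[t] <= 2 by apply: dvdn_leq; rewrite ?order_dvdn ?t2.
have [os ot] : #[s] = n /\ #[t] = 2 by nia.
have defD : <[s]> ><| <[t]> = <<[set s; t]>>.
  by rewrite gen_set2 sdprodEY // card_joing_TI // -gen_set2 oD -!orderE os ot.
have db : #[b] %| #[s] by rewrite os order_dvdn bn.
have dc : #[c] %| #[t] by rewrite ot order_dvdn c2.
have act : {in <[s]> & <[t]>, morph_act 'J 'J (eltm_morphism db) (eltm_morphism dc)}.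
  apply: (@morph_act_gens [set s] [set t]) => // _ _ /set1P-> /set1P->.
  by rewrite tst morphV ?cycle_id //= !eltm_id (dihedral_conj c2 cb2).
by exists (sdprodm_morphism defD act); rewrite /= sdprodmEl ?sdprodmEr ?cycle_id //= !eltm_id.
Qed.

Lemma ker_morphim_card G K (W : {set rT}) (f : {morphism G >-> rT}) :
    K \subset 'ker f -> W \subset f @* G -> #|G| <= #|K| * #|W| ->
  'ker f = K /\ f @* G = W.
Proof.
move=> sKker sWim le_G.
have card_G : (#|'ker f| * #|f @* G|)%N = #|G|.
  by rewrite card_morphim setIid Lagrange // morphpre_sub.
have le_K := subset_leq_card sKker; have le_W := subset_leq_card sWim.
have ge_K : #|'ker f| <= #|K|.
  rewrite -(leq_pmul2r (cardG_gt0 (f @* G))) card_G.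
  exact: leq_trans le_G (leq_mul (leqnn _) le_W).
have ge_W : #|f @* G| <= #|W|.
  rewrite -(leq_pmul2l (cardG_gt0 ('ker f))) card_G.
  exact: leq_trans le_G (leq_mul le_K (leqnn _)).
by split; apply/eqP; rewrite eq_sym eqEcard ?sKker ?sWim.
Qed.

End GroupLemmas.

Lemma nth_perm_iota_lt n l k : perm_eq l (iota 0 n) -> k < n -> nth 0 l k < n.
Proof.
move=> l_perm k_lt; have : nth 0 l k \in l by rewrite mem_nth ?(perm_size l_perm) ?size_iota.
by rewrite (perm_mem l_perm) mem_iota.
Qed.

(* The identity when [l] does not list 0, ..., 7 in some order. *)
Definition perm8_fun (l : seq nat) (i : 'I_8) : 'I_8 :=
  if perm_eq l (iota 0 8) then inord (nth 0 l i) else i.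

Lemma perm8_fun_inj l : injective (perm8_fun l).
Proof.
move=> i j; rewrite /perm8_fun; case: ifP => [l_perm | _ //].
move/(congr1 (@nat_of_ord 8)); rewrite !inordK ?(nth_perm_iota_lt l_perm) // => /eqP.
rewrite nth_uniq ?(perm_uniq l_perm) ?(perm_size l_perm) ?size_iota ?iota_uniq //.
by move/eqP/val_inj.
Qed.

Definition perm8 (l : seq nat) : {perm 'I_8} := perm (@perm8_fun_inj l).

Definition seq8 (p : {perm 'I_8}) : seq nat := [seq nat_of_ord (p i) | i <- enum 'I_8].

Lemma nth_seq8 p (i : 'I_8) : nth 0 (seq8 p) i = p i.
Proof. by rewrite (nth_map ord0) ?size_enum_ord // nth_ord_enum. Qed.

Lemma size_seq8 p : size (seq8 p) = 8.
Proof. by rewrite size_map size_enum_ord. Qed.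

Lemma seq8_inj : injective seq8.
Proof.
move=> p q pq; apply/permP => i; apply: ord_inj.
by rewrite -!nth_seq8 pq.
Qed.

Lemma seq8_perm_eq p : perm_eq (seq8 p) (iota 0 8).
Proof.
have -> : seq8 p = map val (map p (enum 'I_8)) by rewrite -map_comp.
rewrite -val_enum_ord; apply: perm_map.
apply: uniq_perm; first by rewrite (map_inj_uniq perm_inj) enum_uniq.
  exact: enum_uniq.
by move=> i; rewrite mem_enum; apply/mapP; exists (p^-1 i); rewrite ?mem_enum ?permKV.
Qed.

Lemma seq8_perm8 l : seq8 (perm8 l) = if perm_eq l (iota 0 8) then l else iota 0 8.
Proof.
apply: (@eq_from_nth _ 0); rewrite size_seq8.
  by case: ifP => [/perm_size|]; rewrite ?size_iota.
move=> k k_lt; have -> : k = Ordinal k_lt by [].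
rewrite nth_seq8 permE /perm8_fun; case: ifP => [l_perm | _]; last by rewrite nth_iota.
by rewrite inordK // (nth_perm_iota_lt l_perm).
Qed.

Definition seq8_mul (l m : seq nat) : seq nat := [seq nth 0 m i | i <- l].

Lemma seq8M p q : seq8 (p * q) = seq8_mul (seq8 p) (seq8 q).
Proof. by rewrite /seq8_mul -map_comp; apply: eq_map => i /=; rewrite permM nth_seq8. Qed.

Lemma seq8_1 : seq8 1 = iota 0 8.
Proof. by rewrite -val_enum_ord; apply: eq_map => i; rewrite perm1. Qed.

Lemma seq8X p n : seq8 (p ^+ n) = iter n (seq8_mul^~ (seq8 p)) (iota 0 8).
Proof. by elim: n => [|n IHn]; rewrite ?expg0 ?seq8_1 // expgSr seq8M IHn. Qed.

Lemma seq8V p : seq8 p^-1 = [seq index i (seq8 p) | i <- iota 0 8].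
Proof.
rewrite -val_enum_ord -map_comp; apply: eq_map => i /=.
have seq8_fun_inj : injective (fun j => nat_of_ord (p j)) by move=> j k /ord_inj/perm_inj.
by rewrite -{2}(permKV p i) /seq8 (index_map seq8_fun_inj) index_enum_ord.
Qed.

Ltac perm8_compute :=
  apply: seq8_inj; rewrite ?seq8M ?seq8V ?seq8X ?seq8_1 ?seq8_perm8; vm_compute; reflexivity.

Definition pv1 := perm8 [:: 0; 1; 2; 3; 6; 7; 5; 4]%N.
Definition pv2 := perm8 [:: 2; 3; 1; 0; 4; 5; 6; 7]%N.
Definition pv3 := perm8 [:: 0; 1; 2; 3; 7; 6; 4; 5]%N.
Definition ps := perm8 [:: 4; 5; 6; 7; 0; 1; 3; 2]%N.
Definition pt := perm8 [:: 0; 1; 3; 2; 4; 5; 6; 7]%N.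

Lemma pv_commute : [/\ commute pv1 pv2, commute pv1 pv3 & commute pv2 pv3].
Proof. by split; perm8_compute. Qed.

Lemma pv_conj_s : [/\ ps * pv1 * ps^-1 = pv2, ps * pv2 * ps^-1 = pv3
  & ps * pv3 * ps^-1 = pv2^-1 * pv1 * pv3].
Proof. by split; perm8_compute. Qed.

Lemma pv_conj_t : [/\ pt * pv1 * pt^-1 = pv3^-1, pt * pv2 * pt^-1 = pv2^-1
  & pt * pv3 * pt^-1 = pv1^-1].
Proof. by split; perm8_compute. Qed.

Lemma pv_order : [/\ pv1 ^+ 4 = 1, pv2 ^+ 4 = 1 & pv3 ^+ 4 = 1].
Proof. by split; perm8_compute. Qed.

Lemma ps_pt_dihedral : [/\ ps ^+ 4 = 1, pt ^+ 2 = 1 & (pt * ps) ^+ 2 = 1].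
Proof. by split; perm8_compute. Qed.

Lemma pv1_pv3 : pv1 * pv3 = 1.
Proof. perm8_compute. Qed.

Definition wreath_seq (l : seq nat) : bool :=
  all (fun x : nat => all (fun y : nat =>
      ((x./2 == y./2) == ((nth 0 l x)./2 == (nth 0 l y)./2)) &&
      ((x./2./2 == y./2./2) == ((nth 0 l x)./2./2 == (nth 0 l y)./2./2)))
    (iota 0 8)) (iota 0 8).

Lemma divn4 m : m %/ 4 = m./2./2.
Proof. by rewrite -!divn2 -divnMA. Qed.

Lemma mem_wreath222 p : (p \in wreath222) = wreath_seq (seq8 p).
Proof.
rewrite inE; under eq_forallb => x do under eq_forallb => y do rewrite !divn4 !divn2.
apply/forallP/allP => [p_tree x | p_tree x].
  rewrite mem_iota => /andP[_ x_lt]; apply/allP => y; rewrite mem_iota => /andP[_ y_lt].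
  by have /forallP/(_ (Ordinal y_lt)) := p_tree (Ordinal x_lt); rewrite -!nth_seq8.
apply/forallP => y; move: (p_tree x); rewrite mem_iota ltn_ord => /(_ isT)/allP/(_ y).
by rewrite mem_iota ltn_ord !nth_seq8 => /(_ isT).
Qed.

(* [n < 128] encodes the exponents in mixed radix (4, 4, 4, 2); the larger powers
   wrap around because pv1, pv2 and ps have order 4. *)
Definition word (n : nat) : {perm 'I_8} :=
  pv1 ^+ n * pv2 ^+ (n %/ 4) * ps ^+ (n %/ 16) * pt ^+ (n %/ 64).

Definition words : seq {perm 'I_8} := [seq word n | n <- iota 0 128].

Lemma seq8_words : uniq (map seq8 words) &&
  perm_eq [seq l <- permutations (iota 0 8) | wreath_seq l] (map seq8 words).
Proof.
rewrite /words -map_comp.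
under eq_map => n do rewrite /= /word !seq8M !seq8X !seq8_perm8.
by vm_compute.
Qed.

Lemma wreath222_words : wreath222 =i words.
Proof.
have /andP[_ words_perm] := seq8_words.
move=> p; rewrite mem_wreath222 -(mem_map seq8_inj) -(perm_mem words_perm).
by rewrite mem_filter mem_permutations seq8_perm_eq andbT.
Qed.

Lemma card_wreath222 : #|wreath222| = 128.
Proof.
have /andP[/map_uniq uniq_words _] := seq8_words.
have enum_words : perm_eq (enum wreath222) words.
  by apply: uniq_perm (enum_uniq _) uniq_words _ => p; rewrite mem_enum wreath222_words.
by rewrite cardE (perm_size enum_words) size_map size_iota.
Qed.

Section Lemma2p1.

Variables (gT : finGroupType) (S : {group gT}) (v1 v2 v3 s t : gT).
Hypotheses (cv12 : commute v1 v2) (cv13 : commute v1 v3) (cv23 : commute v2 v3).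
Hypotheses (ov1 : #[v1] = 4) (ov2 : #[v2] = 4) (ov3 : #[v3] = 4).
Hypothesis oV : #|<<[set v1; v2; v3]>>| = 64.
Hypotheses (t2 : t ^+ 2 = 1) (s4 : s ^+ 4 = 1) (ts2 : (t * s) ^+ 2 = 1).
Hypothesis oD : #|<<[set s; t]>>| = 8.
Hypotheses (tv1 : t * v1 * t^-1 = v3^-1) (tv2 : t * v2 * t^-1 = v2^-1).
Hypotheses (sv1 : s * v1 * s^-1 = v2) (sv2 : s * v2 * s^-1 = v3).
Hypothesis sv3 : s * v3 * s^-1 = v2^-1 * v1 * v3.
Hypothesis defS : <<[set v1; v2; v3]>> ><| <<[set s; t]>> = S.

Local Notation V := <<[set v1; v2; v3]>>.
Local Notation D := <<[set s; t]>>.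

Lemma tv3 : t * v3 * t^-1 = v1^-1.
Proof.
have tV : t^-1 = t by rewrite -[t^-1]mul1g -t2 expgS expg1 mulgK.
have tK : t * t = 1 by rewrite -t2 expgS expg1.
by rewrite tV -[v3]invgK -tv1 !invMg invgK tV !mulgA tK mul1g -mulgA tK mulg1.
Qed.

Lemma mem_V : [/\ v1 \in V, v2 \in V & v3 \in V].
Proof. by split; rewrite mem_gen // !inE eqxx ?orbT. Qed.

Lemma mem_D : s \in D /\ t \in D.
Proof. by split; rewrite mem_gen // !inE eqxx ?orbT. Qed.

Lemma mem_S : [/\ v1 \in S, v2 \in S, v3 \in S, s \in S & t \in S].
Proof.
have [v1V v2V v3V] := mem_V; have [sD tD] := mem_D.
have [/andP[/subsetP VS _] /subsetP DS _ _ _] := sdprod_context defS.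
by split; [exact: VS | exact: VS | exact: VS | exact: DS | exact: DS].
Qed.

Lemma card_S : #|S| = 512.
Proof. by rewrite -(sdprod_card defS) oV oD. Qed.

Lemma order_v1v3 : #[v1 * v3] = 4.
Proof.
have [v1V v2V v3V] := mem_V.
have [pr [pr1 _ pr3]] : exists pr : {morphism V >-> gT}, [/\ pr v1 = 1, pr v2 = 1 & pr v3 = v3].
  apply: morph_of_cycles3; rewrite ?ov1 ?ov2 ?ov3 ?oV ?order1 //; apply: commute_sym; exact: commute1.
have pr_v1v3 : pr (v1 * v3) = v3 by rewrite morphM // pr1 pr3 mul1g.
have v1v3_4 : (v1 * v3) ^+ 4 = 1 by rewrite expgMn // -{1}ov1 -ov3 !expg_order mulg1.
apply/eqP; rewrite eqn_dvd order_dvdn v1v3_4 eqxx -{1}ov3 -{1}pr_v1v3.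
by rewrite morph_order ?groupM.
Qed.

Lemma morph_to_wreath : exists f : {morphism S >-> {perm 'I_8}},
  [/\ f v1 = pv1, f v2 = pv2, f v3 = pv3, f s = ps & f t = pt].
Proof.
have [v1V v2V v3V] := mem_V; have [sD tD] := mem_D.
have [fV [fv1 fv2 fv3]] : exists fV : {morphism V >-> {perm 'I_8}},
    [/\ fV v1 = pv1, fV v2 = pv2 & fV v3 = pv3].
  have [c12 c13 c23] := pv_commute; have [o1 o2 o3] := pv_order.
  by apply: morph_of_cycles3; rewrite ?ov1 ?ov2 ?ov3 ?oV ?order_dvdn ?o1 ?o2 ?o3.
have [fD [fs ft]] : exists fD : {morphism D >-> {perm 'I_8}}, fD s = ps /\ fD t = pt.
  have [ps4 pt2 ptps2] := ps_pt_dihedral.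
  exact: dihedral_morphism s4 t2 ts2 oD ps4 pt2 ptps2.
have [_ _ _ nVD _] := sdprod_context defS.
have act : {in V & D, morph_act 'J 'J fV fD}.
  apply: morph_act_gens nVD _ => x a; rewrite !inE.
  have [psv1 psv2 psv3] := pv_conj_s; have [ptv1 ptv2 ptv3] := pv_conj_t.
  move=> /orP[/orP[]|] /eqP-> /orP[] /eqP->;
    rewrite ?(sv1, sv2, sv3, tv1, tv2, tv3) ?morphM ?morphV ?fv1 ?fv2 ?fv3 ?fs ?ft //;
    by rewrite ?groupM ?groupV.
exists (sdprodm_morphism defS act).
by split; rewrite /= ?(sdprodmEl _ _ v1V, sdprodmEl _ _ v2V, sdprodmEl _ _ v3V,
  sdprodmEr _ _ sD, sdprodmEr _ _ tD).
Qed.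

Lemma quotient_wreath :
  [/\ cyclic <[v1 * v3]>, #[v1 * v3] = 4, <[v1 * v3]> <| S
     & S / <[v1 * v3]> \isog wreath222].
Proof.
have [v1S v2S v3S sS tS] := mem_S.
have [f [fv1 fv2 fv3 fs ft]] := morph_to_wreath.
have ker_v1v3 : <[v1 * v3]> \subset 'ker f.
  by rewrite cycle_subG; apply/kerP; rewrite ?groupM // morphM // fv1 fv3 pv1_pv3.
have im_wreath : wreath222 \subset f @* S.
  apply/subsetP => p; rewrite wreath222_words => /mapP[n _ ->].
  have im x : x \in S -> f x \in f @* S by move=> xS; rewrite mem_morphim.
  by rewrite /word -fv1 -fv2 -fs -ft !groupM ?groupX ?im.
have [kerE imE] : 'ker f = <[v1 * v3]> /\ f @* S = wreath222.
  by apply: ker_morphim_card; rewrite // card_S -orderE order_v1v3 card_wreath222.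
split; [exact: cycle_cyclic | exact: order_v1v3 | |].
  by rewrite -kerE ker_normal.
by rewrite -kerE -imE first_isog.
Qed.

End Lemma2p1.

Theorem lemma2p1 (gT : finGroupType) (S : {group gT}) (v1 v2 v3 s t : gT) :
  (* v1, v2, v3 commute, have order 4, and generate (Z/4)^3 *)
  commute v1 v2 -> commute v1 v3 -> commute v2 v3 ->
  #[v1]%g = 4 -> #[v2]%g = 4 -> #[v3]%g = 4 ->
  #|<<[set v1; v2; v3]>>%g| = 64 ->
  (* s, t generate D8 = < t, s | t^2 = s^4 = (ts)^2 = 1 > *)
  (t ^+ 2 = 1)%g -> (s ^+ 4 = 1)%g -> ((t * s) ^+ 2 = 1)%g ->
  #|<<[set s; t]>>%g| = 8 ->
  (* the conjugation action of D8 on (Z/4)^3 *)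
  (t * v1 * t^-1 = v3^-1)%g ->
  (t * v2 * t^-1 = v2^-1)%g ->
  (s * v1 * s^-1 = v2)%g ->
  (s * v2 * s^-1 = v3)%g ->
  (s * v3 * s^-1 = v2^-1 * v1 * v3)%g ->
  (* S = (Z/4)^3 ><| D8 *)
  (<<[set v1; v2; v3]>> ><| <<[set s; t]>> = S)%g ->
  [/\ cyclic <[(v1 * v3)%g]>%g, #[(v1 * v3)%g]%g = 4,
      (<[(v1 * v3)%g]> <| S)%g
    & (S / <[(v1 * v3)%g]>)%g \isog wreath222].
Proof. exact: quotient_wreath. Qed.
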